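(* For integers $n\ge 1$ and $t\ge 1$ let $c_n(-2,t)=(-1)^{n+t}\frac{2n}{n+t}\binom{n+t}{2t}$ (an integer). Then: (1) if $s\geq 1$, $J\geq 1$, and $n\geq 0$ is even, then $c_n(-2,2^sJ-1)\equiv 0\pmod{2^{s+1}}$; (2) if $J\geq 0$ and $n\not\equiv 13,14\pmod{27}$, then $c_n(-2,27J+13)\equiv 0\pmod 3$; (3) if $J\geq 1$ and $n\not\equiv \pm1\pmod{27}$, then $c_n(-2,27J-1)\equiv 0\pmod 3$.
   Context: In (1), for $n=0$ the formula gives $c_0(-2,t)=0$. Binomial coefficients $\binom{m}{k}$ with $k>m$ are $0$. *)

From mathcomp Require Import all_boot all_order all_algebra.
Set Implicit Arguments. Unset Strict Implicit. Unset Printing Implicit Defensive.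
Import Order.TTheory GRing.Theory Num.Theory.
Local Open Scope ring_scope.

(* c_n(-2,t) = (-1)^(n+t) * (2n/(n+t)) * binom(n+t, 2t), computed in rat
   (for n = 0 this is 0; 'C(m,k) = 0 for k > m). *)
Definition cm2 (n t : nat) : rat :=
  (-1) ^+ (n + t) * ((2 * n)%:R / (n + t)%:R) * ('C(n + t, 2 * t))%:R.

Definition rat_cong0 (x : rat) (m : nat) : Prop :=
  exists k : int, x = (m%:Z * k)%:~R.

From mathcomp Require Import all_boot all_order all_algebra.
From mathcomp Require Import zify ring.
Import GRing.Theory Num.Theory.
Set Implicit Arguments. Unset Strict Implicit. Unset Printing Implicit Defensive.

(* With N := n + t, the identity (n + t) c = 2n 'C(N, 2t) shows that c_n(-2,t)
   is, up to sign, the integer c := 'C(N - 1, 2t) + 'C(N, 2t).  Two more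
   binomial identities carry the divisibility:
     t * c = n * 'C(N - 1, 2t - 1),
     (N + 1) * N * (n - t) * c = 2n * (2t + 2)(2t + 1) * 'C(N + 1, 2t + 2).
   In (1), t is odd: if 2^s | n, the first one (with 'C(N - 1, 2t - 1) even)
   gives 2^(s+1) | c; otherwise n and N + 1 have the same 2-adic valuation,
   N and n - t are odd, and 2^(s+1) | 2t + 2 in the second one.
   In (2) and (3), 2t mod 27 is so large that a carry in base 3 makes both
   binomials divisible by 3, except for n = 0 mod 27 in (3), where the first
   identity applies. *)

Lemma dvdn_bin_mul_pfactor p e a j :
  prime p -> ~~ (p ^ e %| j) -> p %| 'C(a * p ^ e, j).
Proof.
move=> p_pr; set q := p ^ e => q_ndvd_j.
have j_gt0 : 0 < j by case: j q_ndvd_j; rewrite ?dvdn0.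
apply: contraNT q_ndvd_j => p_ndvd_C.
have q_coprime_C : coprime q 'C(a * q, j) by rewrite coprimeXl ?prime_coprime.
have := mul_bin_diag (a * q) j.-1; rewrite prednK // => jC_eq.
by rewrite -(Gauss_dvdl _ q_coprime_C) -jC_eq dvdn_mulr ?dvdn_mull.
Qed.

Lemma prime_dvdn_bin_mod p e m k :
  prime p -> m %% p ^ e < k %% p ^ e -> p %| 'C(m, k).
Proof.
move=> p_pr; set q := p ^ e => lt_mod.
rewrite (divn_eq m q) -binomial.Vandermonde; apply: dvdn_sum => -[j /= le_jk] _.
have [/dvdnP[i def_j] | q_ndvd_j] := boolP (q %| j); last first.
  by rewrite dvdn_mulr ?dvdn_bin_mul_pfactor.
rewrite [X in _ * X]bin_small ?muln0 //.
have def_k : k = i * q + (k - j) by rewrite def_j subnKC // -def_j.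
by apply: leq_trans lt_mod _; rewrite {1}def_k modnMDl leq_mod.
Qed.

Lemma dvd2_bin_even_odd m k : ~~ odd m -> odd k -> 2 %| 'C(m, k).
Proof.
case: k => // k m_even k_odd.
by rewrite -(Gauss_dvdr _ (_ : coprime 2 k.+1)) ?coprime2n // -mul_bin_diag
  dvdn_mulr // dvdn2.
Qed.

Definition cm2n (n t : nat) : nat := 'C((n + t).-1, 2 * t) + 'C(n + t, 2 * t).

Lemma cm2n_small n t : n < t -> cm2n n t = 0.
Proof. by move=> lt_nt; rewrite /cm2n !bin_small //; lia. Qed.

Lemma mul_cm2n_diag n t : (n + t) * cm2n n t = 2 * n * 'C(n + t, 2 * t).
Proof.
rewrite /cm2n mulnDr mul_bin_down -mulnDl.
have [le_tn | lt_nt] := leqP t n; last by rewrite bin_small ?muln0 //; lia.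
by congr (_ * _); lia.
Qed.

Lemma mul_cm2n_left n t :
  0 < t -> t * cm2n n t = n * 'C((n + t).-1, (2 * t).-1).
Proof.
move=> t_gt0; apply/eqP; rewrite -(@eqn_pmul2l (n + t)) ?addn_gt0 ?t_gt0 ?orbT //.
have := mul_bin_diag (n + t) (2 * t).-1; rewrite prednK ?muln_gt0 // => diag.
by rewrite mulnCA mul_cm2n_diag [X in _ == X]mulnCA diag; apply/eqP; ring.
Qed.

Lemma mul_cm2n_up n t :
  (n + t).+1 * (n + t) * (n - t) * cm2n n t =
  2 * n * ((2 * t).+2 * (2 * t).+1 * 'C((n + t).+1, (2 * t).+2)).
Proof.
set N := n + t.
have down : (n - t) * 'C(N, 2 * t) = (2 * t).+1 * 'C(N, (2 * t).+1).
  by rewrite (_ : n - t = N - 2 * t) -?mul_bin_down ?mul_bin_diag //; lia.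
have up : N.+1 * 'C(N, (2 * t).+1) = (2 * t).+2 * 'C(N.+1, (2 * t).+2).
  exact: mul_bin_diag.
transitivity (N.+1 * (n - t) * (N * cm2n n t)); first by ring.
rewrite mul_cm2n_diag.
transitivity (2 * n * (N.+1 * ((2 * t).+1 * 'C(N, (2 * t).+1)))).
  by rewrite -down; ring.
by rewrite [N.+1 * _]mulnCA up; ring.
Qed.

Lemma dvdn_cm2n_coprime d n t :
  coprime d t -> d %| n * 'C((n + t).-1, (2 * t).-1) -> d %| cm2n n t.
Proof.
case: t => [|t]; first by rewrite /coprime gcdn0 => /eqP->; rewrite dvd1n.
by move=> d_coprime_t dvd_nC; rewrite -(Gauss_dvdr _ d_coprime_t) mul_cm2n_left.
Qed.

Lemma prime_dvdn_cm2n_mod p e n t :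
  prime p -> (n + t).-1 %% p ^ e < (2 * t) %% p ^ e ->
  (n + t) %% p ^ e < (2 * t) %% p ^ e -> p %| cm2n n t.
Proof.
by move=> p_pr lt1 lt2; apply: dvdn_add; [exact: prime_dvdn_bin_mod lt1 |
  exact: prime_dvdn_bin_mod lt2].
Qed.

Section TwoAdic.

Variables (s t n : nat).
Hypotheses (t_odd : odd t) (n_even : ~~ odd n).

Lemma pow2_dvdn_cm2n_high : 2 ^ s %| n -> 2 ^ s.+1 %| cm2n n t.
Proof.
move=> pow2_dvd_n; have t_gt0 : 0 < t by case: t t_odd.
apply: dvdn_cm2n_coprime; first by rewrite coprimeXl ?coprime2n.
rewrite expnSr dvdn_mul // dvd2_bin_even_odd //.
  by rewrite -subn1 oddB ?addn_gt0 ?t_gt0 ?orbT // oddD t_odd (negbTE n_even).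
by rewrite -subn1 oddB ?muln_gt0 // oddM.
Qed.

Lemma pow2_dvdn_cm2n_low :
  2 ^ s %| t.+1 -> ~~ (2 ^ s %| n) -> t < n -> 2 ^ s.+1 %| cm2n n t.
Proof.
move=> /dvdnP[K def_t1] pow2_ndvd_n lt_tn.
have n_gt0 : 0 < n by case: n pow2_ndvd_n; rewrite ?dvdn0.
have [a coprime_2a def_n] := pfactor_coprime (isT : prime 2) n_gt0.
have a_odd : odd a by rewrite -coprime2n.
move: def_n; set v := logn 2 n => def_n.
have lt_vs : v < s.
  rewrite ltnNge; apply: contra pow2_ndvd_n => le_sv.
  by rewrite def_n dvdn_mull // dvdn_exp2l.
pose b := a + K * 2 ^ (s - v).
have def_N1 : (n + t).+1 = b * 2 ^ v.
  by rewrite -addnS def_t1 def_n mulnDl -mulnA -expnD subnK // ltnW.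
have coprime_cofactor : coprime (2 ^ s.+1) (b * (n + t) * (n - t)).
  rewrite coprimeXl // coprime2n !oddM /b oddD a_odd oddM oddX subn_eq0 leqNgt.
  by rewrite lt_vs andbF oddD (oddB (ltnW lt_tn)) t_odd (negbTE n_even).
have up : b * (n + t) * (n - t) * cm2n n t =
          2 * a * ((2 * t).+2 * (2 * t).+1 * 'C((n + t).+1, (2 * t).+2)).
  apply/eqP; rewrite -(@eqn_pmul2r (2 ^ v)) ?expn_gt0 //; apply/eqP.
  transitivity ((n + t).+1 * (n + t) * (n - t) * cm2n n t).
    by rewrite def_N1; ring.
  by rewrite mul_cm2n_up [in 2 * n]def_n; ring.
have def_2t2 : (2 * t).+2 = 2 * (K * 2 ^ s) by rewrite -def_t1; lia.
rewrite -(Gauss_dvdr _ coprime_cofactor) up dvdn_mull // !dvdn_mulr //.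
by rewrite def_2t2 expnS dvdn_pmul2l ?dvdn_mull.
Qed.

End TwoAdic.

Lemma pow2_dvdn_cm2n s t n :
  0 < s -> 2 ^ s %| t.+1 -> ~~ odd n -> 2 ^ s.+1 %| cm2n n t.
Proof.
move=> s_gt0 pow2_dvd_t1 n_even.
have t_odd : odd t.
  have two_dvd_t1 : 2 %| t.+1.
    by apply: dvdn_trans pow2_dvd_t1; rewrite -{1}(expn1 2) dvdn_exp2l.
  by rewrite dvdn2 /= negbK in two_dvd_t1.
have [lt_nt | lt_tn | eq_nt] := ltngtP n t.
- by rewrite cm2n_small.
- have [pow2_dvd_n | pow2_ndvd_n] := boolP (2 ^ s %| n).
    exact: pow2_dvdn_cm2n_high.
  exact: pow2_dvdn_cm2n_low.
- by move: n_even; rewrite eq_nt t_odd.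
Qed.

Local Open Scope ring_scope.

Lemma cm2E n t : (0 < n + t)%N -> cm2 n t = (-1) ^+ (n + t) * (cm2n n t)%:R.
Proof.
move=> nt_gt0; rewrite /cm2 -mulrA; congr (_ * _).
have nt_neq0 : (n + t)%:R != 0 :> rat by rewrite pnatr_eq0 -lt0n.
apply: (mulfI nt_neq0); rewrite mulrA [_%:R * (_ / _)]mulrC divfK //.
by rewrite -!natrM mul_cm2n_diag.
Qed.

Lemma rat_cong0_cm2 n t m : (m %| cm2n n t)%N -> rat_cong0 (cm2 n t) m.
Proof.
case/dvdnP=> k cm2n_eq; have [/eqP | nt_gt0] := posnP (n + t).
  rewrite addn_eq0 => /andP[/eqP-> _].
  by exists 0; rewrite /cm2 muln0 !(mul0r, mulr0).
exists ((-1) ^+ (n + t) * k%:Z); rewrite cm2E // cm2n_eq.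
by rewrite !intrM rmorph_sign natrM; ring.
Qed.

Local Close Scope ring_scope.

Theorem mainTheorem9 :
  (forall (s J n : nat), (1 <= s)%N -> (1 <= J)%N -> ~~ odd n ->
     rat_cong0 (cm2 n (2 ^ s * J - 1)) (2 ^ s.+1)) /\
  (forall (J n : nat), n %% 27 != 13 -> n %% 27 != 14 ->
     rat_cong0 (cm2 n (27 * J + 13)) 3) /\
  (forall (J n : nat), (1 <= J)%N -> n %% 27 != 1 -> n %% 27 != 26 ->
     rat_cong0 (cm2 n (27 * J - 1)) 3).
Proof.
have pow3_3 : 3 ^ 3 = 27 by [].
split; [|split].
- move=> s J n s_gt0 J_gt0 n_even; apply/rat_cong0_cm2/pow2_dvdn_cm2n => //.
  by rewrite subn1 prednK ?muln_gt0 ?expn_gt0 ?J_gt0 // dvdn_mulr.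
- move=> J n n_mod_neq13 n_mod_neq14; apply: rat_cong0_cm2.
  by apply: (@prime_dvdn_cm2n_mod 3 3) => //; rewrite pow3_3; lia.
- case=> // J n _ n_mod_neq1 n_mod_neq26; apply: rat_cong0_cm2.
  rewrite (_ : 27 * J.+1 - 1 = 27 * J + 26); last by lia.
  have [n_mod0 | n_mod_neq0] := eqVneq (n %% 27) 0.
    apply: dvdn_cm2n_coprime; last by apply: dvdn_mulr; lia.
    by rewrite prime_coprime //; lia.
  by apply: (@prime_dvdn_cm2n_mod 3 3) => //; rewrite pow3_3; lia.
Qed.
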